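(* Let $G$ be a finitely generated group hyperbolic relative to a finite collection $\mathcal P$, $S$ a finite generating set, $(\epsilon,R,D)$ thin-triangle constants, and $U\subset V\cup W$ a finite subset with $|U|\ge 2$. Then for every positive integer $r$, the $r$-hull $U_r$ is finite.
   Context: $\Gamma$ is the Cayley graph of $G$ w.r.t. $S$, $V=G$, $W$ the set of cosets $gP_\lambda$; relative hyperbolicity means the coned-off Cayley graph (vertex set $V\cup W$, edges of $\Gamma$ plus edges $(v,w)$ for $v\in w$) is fine (for each edge $e$ and integer $m$, finitely many circuits of length $\le m$ contain $e$) and $\delta$-hyperbolic. $|\cdot,\cdot|_S$ is extended to $V\cup W$ via distances in $\Gamma$ between corresponding elements/cosets. For a geodesic edge-path $p=(p_j)_{j=0}^\ell$ in $\Gamma$, $p_i$ is $(\epsilon,R)$-deep in $w\in W$ if $R\le i\le\ell-R$ and $|p_j,w|_S\le\epsilon$ for all $|j-i|\le R$. A geodesic from $a$ to $b$ ($a,b\in V\cup W$) is a geodesic of length $|a,b|_S$ starting at $a$ (if $a\in V$) or in $a$ (if $a\in W$), ending analogously at $b$; for $i>\ell$, $p_i:=p_\ell$. Positive integers $(\epsilon,R,D)$ are thin-triangle constants if: $D\ge\epsilon$; no vertex of a geodesic in $\Gamma$ is $(\epsilon,R)$-deep in two distinct cosets; and for all $a,b,c\in V\cup W$ with $a\ne b$, geodesics $p^{ab},p^{bc},p^{ac}$, $\ell=|a,b|_S$, $0\le i\le\ell$, with $z=w$ if $p^{ab}_i$ is $(\epsilon,R)$-deep in $w$ and $z=p^{ab}_i$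 otherwise, we have $|z,p^{ac}_i|_S\le D$ or $|z,p^{bc}_{\ell-i}|_S\le D$. The $r$-hull $U_r$ of finite $U$ is the union of all $v\in V$ with $|v,u|_S\le r$ for every $u\in U$, and all $w\in W$ with $|w,u|_S\le r+\epsilon$ for every $u\in U$. *)

From Stdlib Require Import Arith List Lia.
Import ListNotations.

Record group := Group {
  carrier :> Type;
  gmul : carrier -> carrier -> carrier;
  gone : carrier;
  ginv : carrier -> carrier;
  gmul_assoc : forall x y z, gmul x (gmul y z) = gmul (gmul x y) z;
  gmul_1l : forall x, gmul gone x = x;
  gmul_1r : forall x, gmul x gone = x;
  gmul_Vl : forall x, gmul (ginv x) x = gone;
  gmul_Vr : forall x, gmul x (ginv x) = gone }.

Section RelHyp.
Variable G : group.

Fixpoint word_eval (w : list G) : G :=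
  match w with [] => gone G | x :: w' => gmul G x (word_eval w') end.

Definition generates (S : list G) : Prop :=
  forall g : G, exists w : list G,
    Forall (fun x => In x S \/ In (ginv G x) S) w /\ word_eval w = g.

Definition is_subgroup (H : G -> Prop) : Prop :=
  H (gone G) /\ (forall x y, H x -> H y -> H (gmul G x y)) /\
  (forall x, H x -> H (ginv G x)).

Variable Sg : list G.
Variable Lam : Type.          (* index set of the peripheral subgroups *)
Variable P : Lam -> G -> Prop.

Definition adjS (x y : G) : Prop :=
  exists s, In s Sg /\ (y = gmul G x s \/ x = gmul G y s).

Definition is_path (p : nat -> G) (n : nat) : Prop :=
  forall i, i < n -> adjS (p i) (p (S i)).

Definition dist_le (x y : G) (n : nat) : Prop :=
  exists (p : nat -> G) (m : nat), m <= n /\ p 0 = x /\ p m = y /\ is_path p m.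

(* VV g = the element g in V; WW l g = the coset g P_l in W
   (W is the disjoint union over l of the left cosets of P_l). *)
Inductive vtx := VV (g : G) | WW (l : Lam) (g : G).

Definition mem_coset (l : Lam) (g x : G) : Prop :=
  exists h, P l h /\ x = gmul G g h.

Definition elems (a : vtx) : G -> Prop :=
  match a with VV g => fun x => x = g | WW l g => mem_coset l g end.

(* equality in V \cup W (cosets are equal as sets) *)
Definition same_vtx (a b : vtx) : Prop :=
  match a, b with
  | VV g, VV h => g = h
  | WW l g, WW l' g' => l = l' /\ forall x, mem_coset l g x <-> mem_coset l' g' x
  | _, _ => False
  end.

Definition distS_le (a b : vtx) (n : nat) : Prop :=
  exists x y, elems a x /\ elems b y /\ dist_le x y n.

(* p (with p_i := p_l for i > l) is a geodesic from a to b of length l *)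
Definition geod (a b : vtx) (p : nat -> G) (l : nat) : Prop :=
  elems a (p 0) /\ elems b (p l) /\ is_path p l /\
  (forall i, l <= i -> p i = p l) /\
  distS_le a b l /\ (forall m, distS_le a b m -> l <= m).

Definition geodGamma (p : nat -> G) (l : nat) : Prop :=
  geod (VV (p 0)) (VV (p l)) p l.

Definition deep (eps R : nat) (p : nat -> G) (l i : nat) (w : vtx) : Prop :=
  R <= i /\ i + R <= l /\
  forall j, i - R <= j -> j <= i + R -> distS_le (VV (p j)) w eps.

Definition thin_triangle_constants (eps R D : nat) : Prop :=
  0 < eps /\ 0 < R /\ 0 < D /\ eps <= D /\
  (forall p l i l1 g1 l2 g2, geodGamma p l ->
     deep eps R p l i (WW l1 g1) -> deep eps R p l i (WW l2 g2) ->
     same_vtx (WW l1 g1) (WW l2 g2)) /\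
  (forall (a b c : vtx) pab lab pbc lbc pac lac,
     ~ same_vtx a b ->
     geod a b pab lab -> geod b c pbc lbc -> geod a c pac lac ->
     forall i, i <= lab ->
     let near z := distS_le z (VV (pac i)) D \/
                   distS_le z (VV (pbc (lab - i))) D in
     (forall l g, deep eps R pab lab i (WW l g) -> near (WW l g)) /\
     ((forall l g, ~ deep eps R pab lab i (WW l g)) -> near (VV (pab i)))).

Definition in_hull (eps r : nat) (U : list vtx) (x : vtx) : Prop :=
  match x with
  | VV _ => forall u, In u U -> distS_le x u r
  | WW _ _ => forall u, In u U -> distS_le x u (r + eps)
  end.

Definition finite_vset (A : vtx -> Prop) : Prop :=
  exists L : list vtx, forall x, A x -> exists y, In y L /\ same_vtx x y.

Definition adjC (a b : vtx) : Prop :=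
  match a, b with
  | VV g, VV h => adjS g h
  | VV v, WW l g => mem_coset l g v
  | WW l g, VV v => mem_coset l g v
  | WW _ _, WW _ _ => False
  end.

Definition is_pathC (q : nat -> vtx) (n : nat) : Prop :=
  forall i, i < n -> adjC (q i) (q (S i)).

Definition distC_le (a b : vtx) (n : nat) : Prop :=
  exists (q : nat -> vtx) (m : nat), m <= n /\ same_vtx (q 0) a /\
    same_vtx (q m) b /\ is_pathC q m.

Definition geodC (a b : vtx) (q : nat -> vtx) (l : nat) : Prop :=
  same_vtx (q 0) a /\ same_vtx (q l) b /\ is_pathC q l /\
  (forall m, distC_le a b m -> l <= m).

Definition hyperbolicC (delta : nat) : Prop :=
  forall x y z qxy lxy qyz lyz qxz lxz,
    geodC x y qxy lxy -> geodC y z qyz lyz -> geodC x z qxz lxz ->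
    forall i, i <= lxy -> exists j,
      (j <= lyz /\ distC_le (qxy i) (qyz j) delta) \/
      (j <= lxz /\ distC_le (qxy i) (qxz j) delta).

(* circuits = simple cycles, as cyclic lists of vertices *)
Definition circuit (c : list vtx) : Prop :=
  3 <= length c /\
  (forall i d, i < length c ->
     adjC (nth i c d) (nth (S i mod length c) c d)) /\
  (forall i j d, i < length c -> j < length c -> i <> j ->
     ~ same_vtx (nth i c d) (nth j c d)).

Definition contains_edge (c : list vtx) (a b : vtx) : Prop :=
  exists i d, i < length c /\
    ((same_vtx (nth i c d) a /\ same_vtx (nth (S i mod length c) c d) b) \/
     (same_vtx (nth i c d) b /\ same_vtx (nth (S i mod length c) c d) a)).

Definition fineC : Prop :=
  forall a b, adjC a b -> forall m, exists L : list (list vtx),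
    forall c, circuit c -> length c <= m -> contains_edge c a b ->
      exists c', In c' L /\ Forall2 same_vtx c c'.

Definition rel_hyperbolic : Prop :=
  fineC /\ exists delta, hyperbolicC delta.

End RelHyp.

From Stdlib Require Import Arith List Lia Classical.
Import ListNotations.

(* If [U] contains a
   vertex [g0], the hull lies in balls around [g0], and a ball meets only
   finitely many cosets since there are finitely many peripheral subgroups.
   Otherwise [U] contains two distinct cosets [a] and [b]; fix a simple Cayley
   path [Sig] from [b] back to [a].  A vertex near both cosets lies near a
   simple path [Pi] from [a] to [b]: either [Pi] meets [Sig], or
   [a, Pi, b, Sig] is a circuit of bounded length through a fixed edge, and
   fineness leaves finitely many such circuits.  A coset [z] near both is
   treated alike with the circuit [a, P1, z, P2, b, Sig], using the vertex
   case when [P1] and [P2] meet. *)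

Set Implicit Arguments.
Unset Strict Implicit.

Section Walks.
Variables (A : Type) (R : A -> A -> Prop).

Inductive walk : list A -> A -> A -> Prop :=
  | walk_one x : walk [x] x x
  | walk_step x y z L : R x y -> walk L y z -> walk (x :: L) x z.

Lemma walk_nonnil L x y : walk L x y -> exists t, L = x :: t.
Proof. destruct 1; eauto. Qed.

Lemma walk_join L1 L2 x y z w :
  walk L1 x y -> R y z -> walk L2 z w -> walk (L1 ++ L2) x w.
Proof.
  induction 1 as [x|x y' y L Hxy _ IH]; intros Hyz H2; simpl.
  - exact (walk_step Hyz H2).
  - exact (walk_step Hxy (IH Hyz H2)).
Qed.

Lemma walk_app L1 L2 x y z : walk L1 x y -> walk (y :: L2) y z -> walk (L1 ++ L2) x z.
Proof.
  induction 1 as [x|x y' y L Hxy _ IH]; intros H2; simpl.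
  - exact H2.
  - exact (walk_step Hxy (IH H2)).
Qed.

Lemma walk_split l1 l2 a x y :
  walk (l1 ++ a :: l2) x y -> walk (l1 ++ [a]) x a /\ walk (a :: l2) a y.
Proof.
  revert x; induction l1 as [|b l1 IH]; intros x H; simpl in *.
  - destruct (walk_nonnil H) as [t E]; injection E as -> _.
    split; [constructor|exact H].
  - inversion H as [? E|? y' ? ? Hxy H']; [destruct l1; discriminate|subst].
    destruct (IH _ H') as [H1 H2]; split; [exact (walk_step Hxy H1)|exact H2].
Qed.

Lemma walk_In_split L x y z : walk L x y -> In z L ->
  exists L1 L2, walk L1 x z /\ walk L2 z y /\
    length L1 <= length L /\ length L2 <= length L.
Proof.
  intros H Hz; destruct (in_split _ _ Hz) as [l1 [l2 ->]].
  destruct (walk_split H) as [H1 H2].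
  exists (l1 ++ [z]), (z :: l2); repeat split; auto; rewrite !length_app; simpl; lia.
Qed.

Lemma walk_rev L x y : (forall u v, R u v -> R v u) -> walk L x y -> walk (rev L) y x.
Proof.
  intros Rsym; induction 1 as [x|x y' y L Hxy _ IH]; simpl; [constructor|].
  exact (walk_join IH (Rsym _ _ Hxy) (walk_one x)).
Qed.

Lemma walk_nth L x y d i : walk L x y -> S i < length L -> R (nth i L d) (nth (S i) L d).
Proof.
  intros H; revert i; induction H as [x|x y' y L Hxy H IH]; intros i Hi; simpl in *; [lia|].
  destruct i as [|i].
  - destruct (walk_nonnil H) as [t ->]; exact Hxy.
  - apply IH; lia.
Qed.

Lemma walk_first L x y d : walk L x y -> nth 0 L d = x.
Proof. destruct 1; reflexivity. Qed.

Lemma walk_last L x y d : walk L x y -> nth (length L - 1) L d = y.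
Proof.
  induction 1 as [x|x y' y L _ H IH]; [reflexivity|].
  destruct (walk_nonnil H) as [t ->]; simpl in *.
  rewrite Nat.sub_0_r in IH; exact IH.
Qed.

Lemma not_NoDup_repeat (l : list A) : ~ NoDup l ->
  exists a l1 l2 l3, l = l1 ++ a :: l2 ++ a :: l3.
Proof.
  induction l as [|a l IH]; intros H; [exfalso; apply H; constructor|].
  destruct (classic (In a l)) as [Ha|Ha].
  - destruct (in_split _ _ Ha) as [l2 [l3 ->]]; exists a, [], l2, l3; reflexivity.
  - assert (Hl : ~ NoDup l) by (intro; apply H; constructor; auto).
    destruct (IH Hl) as [b [l1 [l2 [l3 ->]]]]; exists b, (a :: l1), l2, l3; reflexivity.
Qed.

Lemma walk_shorten L x y : walk L x y ->
  exists L', walk L' x y /\ NoDup L' /\ length L' <= length L.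
Proof.
  induction L as [L IH] using (induction_ltof1 _ (@length A)); intros H.
  destruct (classic (NoDup L)) as [Hd|Hd]; [exists L; auto|].
  destruct (not_NoDup_repeat Hd) as [a [l1 [l2 [l3 ->]]]].
  destruct (walk_split H) as [H1 H2].
  destruct (walk_split (l1 := a :: l2) H2) as [_ H3].
  destruct (IH (l1 ++ a :: l3)) as [L' [HL' [Hd' Hl']]].
  - unfold ltof; rewrite !length_app; simpl; rewrite length_app; simpl; lia.
  - rewrite (app_assoc l1 [a] l3 : l1 ++ a :: l3 = (l1 ++ [a]) ++ l3).
    exact (walk_app H1 H3).
  - exists L'; repeat split; auto.
    rewrite !length_app in *; simpl in *; rewrite length_app in *; simpl in *; lia.
Qed.

End Walks.

Lemma walk_map A B (R : A -> A -> Prop) (R' : B -> B -> Prop) (f : A -> B) L x y :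
  (forall u v, R u v -> R' (f u) (f v)) -> walk R L x y -> walk R' (map f L) (f x) (f y).
Proof. intros Hf; induction 1; simpl; econstructor; eauto. Qed.

Lemma ForallOrdPairs_nth A (R : A -> A -> Prop) l d i j :
  (forall u v, R u v -> R v u) -> ForallOrdPairs R l ->
  i < length l -> j < length l -> i <> j -> R (nth i l d) (nth j l d).
Proof.
  intros Rsym H; revert i j; induction H as [|a l Ha _ IH]; intros i j Hi Hj Hij;
    simpl in *; [lia|].
  rewrite Forall_forall in Ha.
  destruct i as [|i], j as [|j]; [lia| | |].
  - apply Ha, nth_In; lia.
  - apply Rsym, Ha, nth_In; lia.
  - apply IH; lia.
Qed.

Lemma Forall2_In_l A B (R : A -> B -> Prop) l l' x :
  Forall2 R l l' -> In x l -> exists y, In y l' /\ R x y.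
Proof.
  induction 1 as [|a b l l' Hab _ IH]; [contradiction|].
  intros [<-|Hx]; [exists b; simpl; auto|].
  destruct (IH Hx) as [y [Hy Hxy]]; exists y; simpl; auto.
Qed.

Section ConedOff.
Variables (G : group) (Sg : list G) (Lam : Type) (P : Lam -> G -> Prop).
Notation vt := (vtx G Lam).
Notation V := (VV G Lam).
Notation W := (WW G Lam).
Notation same := (same_vtx G Lam P).
Notation adjS := (adjS G Sg).
Notation adjC := (adjC G Sg Lam P).
Notation mem_coset := (mem_coset G Lam P).
Notation mul := (gmul G).
Notation inv := (ginv G).

Lemma adjS_sym x y : adjS x y -> adjS y x.
Proof. intros [s [Hs [H|H]]]; exists s; auto. Qed.

(* A walk is the list of its vertices, so [n] edges make [S n] entries. *)
Definition near (n : nat) (x y : G) : Prop :=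
  exists L, walk adjS L x y /\ length L <= S n.

Lemma near_sym n x y : near n x y -> near n y x.
Proof.
  intros [L [HL Hl]]; exists (rev L); split;
    [exact (walk_rev adjS_sym HL)|rewrite length_rev; exact Hl].
Qed.

Lemma near_trans m n x y z : near m x y -> near n y z -> near (m + n) x z.
Proof.
  intros [L1 [H1 Hl1]] [L2 [H2 Hl2]].
  destruct (walk_nonnil H2) as [t ->].
  exists (L1 ++ t); split; [exact (walk_app H1 H2)|].
  rewrite length_app; simpl in Hl2; lia.
Qed.

Lemma near_simple n x y : near n x y ->
  exists L, walk adjS L x y /\ NoDup L /\ length L <= S n.
Proof.
  intros [L [HL Hl]]; destruct (walk_shorten HL) as [L' [H1 [H2 H3]]].
  exists L'; repeat split; auto; lia.
Qed.

Lemma near_walk_In n L x y z : walk adjS L x y -> length L <= S n -> In z L ->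
  near n x z /\ near n z y.
Proof.
  intros HL Hl Hz; destruct (walk_In_split HL Hz) as [L1 [L2 [H1 [H2 [Hl1 Hl2]]]]].
  split; [exists L1|exists L2]; split; auto; lia.
Qed.

Lemma walk_of_path (p : nat -> G) m :
  is_path G Sg p m -> walk adjS (map p (seq 0 (S m))) (p 0) (p m).
Proof.
  revert p; induction m as [|m IH]; intros p Hp; [constructor|].
  change (seq 0 (S (S m))) with (0 :: seq 1 (S m)).
  rewrite <- seq_shift; simpl map; rewrite map_map.
  apply (walk_step (y := p 1)); [apply Hp; lia|].
  apply (IH (fun i => p (S i))); intros i Hi; apply Hp; lia.
Qed.

Lemma near_of_dist_le x y n : dist_le G Sg x y n -> near n x y.
Proof.
  intros [p [m [Hm [<- [<- Hp]]]]]; exists (map p (seq 0 (S m))).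
  rewrite length_map, length_seq; split; [exact (walk_of_path Hp)|lia].
Qed.

Lemma word_walk w : Forall (fun s => In s Sg \/ In (inv s) Sg) w ->
  forall g, exists L, walk adjS L g (mul g (word_eval G w)).
Proof.
  induction 1 as [|s w Hs _ IH]; intros g.
  - exists [g]; simpl; rewrite gmul_1r; constructor.
  - destruct (IH (mul g s)) as [L HL]; exists (g :: L); simpl.
    rewrite gmul_assoc; apply (walk_step (y := mul g s)); [|exact HL].
    destruct Hs as [Hs|Hs]; [exists s; auto|].
    exists (inv s); split; [exact Hs|right].
    rewrite <- gmul_assoc, gmul_Vr, gmul_1r; reflexivity.
Qed.

Lemma generates_connected : generates G Sg -> forall g h, exists n, near n g h.
Proof.
  intros HS g h; destruct (HS (mul (inv g) h)) as [w [Hw E]].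
  destruct (word_walk Hw g) as [L HL].
  rewrite E, gmul_assoc, gmul_Vr, gmul_1l in HL; exists (length L); exists L; auto.
Qed.

Definition neighbours (z : G) : list G :=
  map (mul z) Sg ++ map (fun s => mul z (inv s)) Sg.

Lemma adjS_neighbours z y : adjS z y -> In y (neighbours z).
Proof.
  intros [s [Hs [->| ->]]]; apply in_or_app; [left; apply in_map; exact Hs|right].
  apply in_map_iff; exists s; split; [|exact Hs].
  rewrite <- gmul_assoc, gmul_Vr, gmul_1r; reflexivity.
Qed.

Fixpoint ball (n : nat) (c : G) : list G :=
  match n with 0 => [c] | S n => c :: flat_map (ball n) (neighbours c) end.

Lemma near_ball n c y : near n c y -> In y (ball n c).
Proof.
  intros [L [HL Hl]]; revert n Hl; induction HL as [x|x y' y L Hxy HL IH]; intros n Hl.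
  - destruct n; simpl; auto.
  - destruct n as [|n]; [destruct (walk_nonnil HL) as [t ->]; simpl in Hl; lia|].
    right; apply in_flat_map; exists y'; split; [exact (adjS_neighbours Hxy)|].
    apply IH; simpl in Hl; lia.
Qed.

Definition nbhd (X : list G) (n : nat) : list G := flat_map (ball n) X.

Lemma near_nbhd X n c y : In c X -> near n c y -> In y (nbhd X n).
Proof. intros Hc Hn; apply in_flat_map; exists c; split; [exact Hc|exact (near_ball Hn)]. Qed.

Lemma same_sym a b : same a b -> same b a.
Proof.
  destruct a, b; simpl; auto.
  intros [-> H]; split; [reflexivity|intro z; rewrite H; tauto].
Qed.

Lemma same_refl a : same a a.
Proof. destruct a; simpl; auto; split; [reflexivity|tauto]. Qed.

Lemma same_V_inv g a : same (V g) a -> a = V g.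
Proof. destruct a; simpl; [intros ->; reflexivity|contradiction]. Qed.

Lemma mem_coset_self l g : is_subgroup G (P l) -> mem_coset l g g.
Proof. intros [H1 _]; exists (gone G); split; [exact H1|rewrite gmul_1r; reflexivity]. Qed.

Lemma same_coset_of_mem l g p : is_subgroup G (P l) -> mem_coset l g p -> same (W l g) (W l p).
Proof.
  intros [_ [Hmul Hinv]] [h [Hh ->]]; split; [reflexivity|intros x; split].
  - intros [h' [Hh' ->]]; exists (mul (inv h) h'); split; [auto|].
    rewrite <- gmul_assoc, (gmul_assoc G h), gmul_Vr, gmul_1l; reflexivity.
  - intros [h' [Hh' ->]]; exists (mul h h'); split; [auto|rewrite gmul_assoc; reflexivity].
Qed.

Definition vertex_labels (c : list vt) : list G :=
  flat_map (fun z => match z with VV _ _ g => [g] | WW _ _ _ _ => [] end) c.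

Definition cone_vertices (c : list vt) : list vt :=
  flat_map (fun z => match z with VV _ _ _ => [] | WW _ _ _ _ => [z] end) c.

Lemma vertex_labels_map_V l : vertex_labels (map V l) = l.
Proof. induction l as [|g l IH]; simpl; [reflexivity|rewrite IH; reflexivity]. Qed.

Lemma cone_vertices_map_V l : cone_vertices (map V l) = [].
Proof. induction l; simpl; auto. Qed.

Lemma In_vertex_labels g c : In (V g) c -> In g (vertex_labels c).
Proof. intros H; apply in_flat_map; exists (V g); simpl; auto. Qed.

Lemma distinct_of_labels c :
  ForallOrdPairs (fun u v => ~ same u v) (cone_vertices c) -> NoDup (vertex_labels c) ->
  ForallOrdPairs (fun u v => ~ same u v) c.
Proof.
  induction c as [|a c IH]; intros Hc Hl; [constructor|].
  destruct a as [g|l0 g]; simpl in Hc, Hl.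
  - inversion Hl as [|? ? Hg Hnd]; constructor; [|auto].
    apply Forall_forall; intros [h|l1 h] Hh; [|simpl; auto].
    intros Hs; apply Hg; simpl in Hs; subst; exact (In_vertex_labels Hh).
  - inversion Hc as [|? ? Hf Hfop]; rewrite Forall_forall in Hf; constructor; [|auto].
    apply Forall_forall; intros [h|l' h] Hh; [simpl; auto|].
    apply Hf, in_flat_map; exists (W l' h); simpl; auto.
Qed.

Lemma circuit_of_closed_walk c u v : walk adjC c u v -> adjC v u -> 3 <= length c ->
  ForallOrdPairs (fun a b => ~ same a b) c -> circuit G Sg Lam P c.
Proof.
  intros Hc Hvu Hl Hd; split; [exact Hl|split].
  - intros i d Hi; destruct (Nat.eq_dec (S i) (length c)) as [E|E].
    + rewrite E, Nat.Div0.mod_same, (walk_first d Hc).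
      replace i with (length c - 1) by lia; rewrite (walk_last d Hc); exact Hvu.
    + rewrite Nat.mod_small by lia; apply (walk_nth d Hc); lia.
  - intros i j d Hi Hj Hij.
    exact (ForallOrdPairs_nth d (fun a b H Hs => H (same_sym Hs)) Hd Hi Hj Hij).
Qed.

Lemma closed_walk_contains_edge c u v : walk adjC c u v -> contains_edge G Lam P c u v.
Proof.
  intros Hc; destruct (walk_nonnil Hc) as [t ->].
  exists (length t), u; split; [simpl; lia|right].
  change (S (length t)) with (length (u :: t)); rewrite Nat.Div0.mod_same.
  replace (length t) with (length (u :: t) - 1) by (simpl; lia).
  rewrite (walk_last u Hc), (walk_first u Hc); split; apply same_refl.
Qed.

Lemma fine_circuit_vertices a b : fineC G Sg Lam P -> adjC a b -> forall m,
  exists Lv : list vt, forall c, circuit G Sg Lam P c -> length c <= m ->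
    contains_edge G Lam P c a b -> forall z, In z c -> exists z', In z' Lv /\ same z z'.
Proof.
  intros Hf Hab m; destruct (Hf a b Hab m) as [L HL]; exists (concat L).
  intros c Hc Hl He z Hz; destruct (HL c Hc Hl He) as [c' [Hc' Hcc']].
  destruct (Forall2_In_l Hcc' Hz) as [z' [Hz' Hs]].
  exists z'; split; [apply in_concat; exists c'; auto|exact Hs].
Qed.

Lemma vertex_labels_app c c' : vertex_labels (c ++ c') = vertex_labels c ++ vertex_labels c'.
Proof. apply flat_map_app. Qed.

Lemma cone_vertices_app c c' : cone_vertices (c ++ c') = cone_vertices c ++ cone_vertices c'.
Proof. apply flat_map_app. Qed.

Definition cosets_through (enumLam : list Lam) (X : list G) : list vt :=
  flat_map (fun l => map (W l) X) enumLam.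

Lemma cosets_through_same enumLam X l g p : (forall l, is_subgroup G (P l)) ->
  (forall l, In l enumLam) -> In p X -> mem_coset l g p ->
  exists w, In w (cosets_through enumLam X) /\ same (W l g) w.
Proof.
  intros HP HLam Hp Hgp; exists (W l p); split; [|exact (same_coset_of_mem (HP l) Hgp)].
  apply in_flat_map; exists l; split; [apply HLam|apply in_map; exact Hp].
Qed.

Lemma adjC_V g h : adjS g h -> adjC (V g) (V h).
Proof. exact id. Qed.

Section Detour.
Hypothesis Hfine : fineC G Sg Lam P.
Hypothesis HP : forall l, is_subgroup G (P l).
Variables (la lb : Lam) (ga gb : G) (Sig : list G).
Hypothesis Hab : ~ same (W la ga) (W lb gb).
Hypothesis HSig : walk adjS Sig gb ga.
Hypothesis HSig_nodup : NoDup Sig.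
Variable enumLam : list Lam.
Hypothesis HLam : forall l, In l enumLam.

(* The closed walk [W la ga :: mid ++ W lb gb :: map V Sig] is a circuit through the
   edge from [W la ga] to [V ga]; distinctness is checked separately on cone vertices
   and on group elements. *)
Lemma detour_vertices_finite m : exists Lv : list vt, forall mid z,
  walk adjC (W la ga :: mid) (W la ga) z -> adjC z (W lb gb) -> length mid <= m ->
  ForallOrdPairs (fun u v => ~ same u v) (W la ga :: cone_vertices mid ++ [W lb gb]) ->
  NoDup (vertex_labels mid ++ Sig) ->
  forall y, In y mid -> exists y', In y' Lv /\ same y y'.
Proof.
  pose proof (mem_coset_self ga (HP la)) as Hga.
  destruct (fine_circuit_vertices (a := W la ga) (b := V ga) Hfine Hga (m + 2 + length Sig))
    as [Lv HLv].
  exists Lv; intros mid z Hmid Hzb Hl Hcones Hlabels y Hy.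
  assert (Hc : walk adjC (W la ga :: mid ++ W lb gb :: map V Sig) (W la ga) (V ga)).
  { apply (walk_join (L1 := W la ga :: mid) Hmid Hzb).
    apply (walk_step (y := V gb)); [exact (mem_coset_self gb (HP lb))|].
    exact (walk_map (f := V) adjC_V HSig). }
  refine (HLv _ (circuit_of_closed_walk Hc Hga _ _) _ _ _ _).
  - destruct mid as [|u mid]; [inversion Hmid; subst; contradiction|].
    destruct (walk_nonnil HSig) as [t ->]; simpl; rewrite length_app; simpl; lia.
  - apply distinct_of_labels; simpl.
    + rewrite cone_vertices_app; simpl; rewrite cone_vertices_map_V; exact Hcones.
    + rewrite vertex_labels_app; simpl; rewrite vertex_labels_map_V; exact Hlabels.
  - simpl; rewrite length_app; simpl; rewrite length_map; lia.
  - exact (closed_walk_contains_edge Hc).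
  - simpl; right; apply in_or_app; auto.
Qed.

Lemma vertices_near_both_finite k : exists Vk : list G, forall v x y,
  mem_coset la ga x -> mem_coset lb gb y -> near k v x -> near k v y -> In v Vk.
Proof.
  destruct (detour_vertices_finite (S (k + k))) as [Lv HLv].
  exists (nbhd Sig (k + (k + k)) ++ nbhd (vertex_labels Lv) k).
  intros v x y Hx Hy Hvx Hvy.
  destruct (near_simple (near_trans (near_sym Hvx) Hvy)) as [Pi [HPi [HPi_nodup HlPi]]].
  apply in_or_app; destruct (classic (exists z, In z Pi /\ In z Sig)) as [[z [HzPi HzSig]]|Hdisj].
  - left; apply (near_nbhd HzSig), near_sym, (near_trans Hvx).
    exact (proj1 (near_walk_In HPi HlPi HzPi)).
  - right; apply (near_nbhd (c := x)); [|exact (near_sym Hvx)].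
    destruct (walk_nonnil HPi) as [t Et].
    assert (Hwalk : walk adjC (W la ga :: map V Pi) (W la ga) (V y)).
    { exact (walk_step (R := adjC) (x := W la ga) (y := V x) Hx
               (walk_map (f := V) adjC_V HPi)). }
    destruct (HLv (map V Pi) (V y) Hwalk Hy) with (y := V x) as [y' [Hy' Hs]].
    + rewrite length_map; exact HlPi.
    + rewrite cone_vertices_map_V; repeat constructor; exact Hab.
    + rewrite vertex_labels_map_V; apply NoDup_app; auto.
      intros z Hz1 Hz2; apply Hdisj; eauto.
    + rewrite Et; left; reflexivity.
    + rewrite (same_V_inv Hs) in Hy'; exact (In_vertex_labels Hy').
Qed.

Lemma coset_detour_finite k : exists Lv : list vt, forall l g p x q y P1 P2,
  mem_coset la ga x -> walk adjS P1 x p -> length P1 <= S k -> mem_coset l g p ->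
  mem_coset l g q -> walk adjS P2 q y -> length P2 <= S k -> mem_coset lb gb y ->
  ~ same (W la ga) (W l g) -> ~ same (W l g) (W lb gb) -> NoDup ((P1 ++ P2) ++ Sig) ->
  exists w, In w Lv /\ same (W l g) w.
Proof.
  destruct (detour_vertices_finite (S (S (S (k + k))))) as [Lv HLv]; exists Lv.
  intros l g p x q y P1 P2 Hx HP1 Hl1 Hp Hq HP2 Hl2 Hy Ha Hb Hnodup.
  assert (Hwalk : walk adjC (W la ga :: map V P1 ++ W l g :: map V P2) (W la ga) (V y)).
  { apply (walk_join (L1 := W la ga :: map V P1) (y := V p) (z := W l g)); [|exact Hp|].
    - exact (walk_step (R := adjC) (x := W la ga) (y := V x) Hx (walk_map (f := V) adjC_V HP1)).
    - exact (walk_step (R := adjC) (x := W l g) (y := V q) Hq (walk_map (f := V) adjC_V HP2)). }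
  apply (HLv _ _ Hwalk Hy).
  - rewrite length_app; simpl; rewrite !length_map; lia.
  - rewrite cone_vertices_app; simpl; rewrite !cone_vertices_map_V; simpl.
    repeat constructor; assumption.
  - rewrite vertex_labels_app; simpl; rewrite !vertex_labels_map_V; exact Hnodup.
  - apply in_or_app; right; left; reflexivity.
Qed.

Lemma cosets_near_both_finite k : exists Wk : list vt, forall l g p x q y,
  mem_coset l g p -> mem_coset la ga x -> near k p x ->
  mem_coset l g q -> mem_coset lb gb y -> near k q y ->
  exists w, In w Wk /\ same (W l g) w.
Proof.
  destruct (vertices_near_both_finite k) as [Vk HVk].
  destruct (coset_detour_finite k) as [Lv HLv].
  set (Wk := W la ga :: W lb gb :: Lv ++ cosets_through enumLam (nbhd (Sig ++ Vk) k)).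
  exists Wk; intros l g p x q y Hp Hx Hpx Hq Hy Hqy.
  destruct (classic (same (W la ga) (W l g))) as [Ha|Ha].
  { exists (W la ga); split; [left; reflexivity|exact (same_sym Ha)]. }
  destruct (classic (same (W l g) (W lb gb))) as [Hb|Hb].
  { exists (W lb gb); split; [right; left; reflexivity|exact Hb]. }
  assert (Hthrough : forall o, mem_coset l g o -> In o (nbhd (Sig ++ Vk) k) ->
    exists w, In w Wk /\ same (W l g) w).
  { intros o Ho Hin; destruct (cosets_through_same HP HLam Hin Ho) as [w [Hw Hs]].
    exists w; split; [right; right; apply in_or_app; right; exact Hw|exact Hs]. }
  destruct (near_simple (near_sym Hpx)) as [P1 [HP1 [HP1_nodup Hl1]]].
  destruct (near_simple Hqy) as [P2 [HP2 [HP2_nodup Hl2]]].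
  destruct (classic (exists z, In z P1 /\ In z Sig)) as [[z [Hz1 Hz]]|Hdisj1].
  { apply (Hthrough p Hp), (near_nbhd (c := z)); [apply in_or_app; auto|].
    exact (proj2 (near_walk_In HP1 Hl1 Hz1)). }
  destruct (classic (exists z, In z P2 /\ In z Sig)) as [[z [Hz2 Hz]]|Hdisj2].
  { apply (Hthrough q Hq), (near_nbhd (c := z)); [apply in_or_app; auto|].
    exact (near_sym (proj1 (near_walk_In HP2 Hl2 Hz2))). }
  destruct (classic (exists z, In z P1 /\ In z P2)) as [[z [Hz1 Hz2]]|Hdisj12].
  { destruct (near_walk_In HP1 Hl1 Hz1) as [Hxz Hzp].
    destruct (near_walk_In HP2 Hl2 Hz2) as [_ Hzy].
    apply (Hthrough p Hp), (near_nbhd (c := z)); [|exact Hzp].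
    apply in_or_app; right; exact (HVk _ _ _ Hx Hy (near_sym Hxz) Hzy). }
  destruct (HLv l g p x q y P1 P2) as [w [Hw Hs]]; auto.
  - apply NoDup_app; [apply NoDup_app; auto|exact HSig_nodup|].
    + intros z Hz1 Hz2; apply Hdisj12; eauto.
    + intros z Hz1 Hz2; apply in_app_or in Hz1.
      destruct Hz1; [apply Hdisj1|apply Hdisj2]; eauto.
  - exists w; split; [right; right; apply in_or_app; left; exact Hw|exact Hs].
Qed.

End Detour.

Lemma hull_finite_at_vertex (enumLam : list Lam) eps r U g0 :
  (forall l, is_subgroup G (P l)) -> (forall l, In l enumLam) -> In (V g0) U ->
  finite_vset G Lam P (in_hull G Sg Lam P eps r U).
Proof.
  intros HP HLam Hg0; exists (map V (ball r g0) ++ cosets_through enumLam (ball (r + eps) g0)).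
  intros [v|l g] Hz; destruct (Hz _ Hg0) as [x [y [Hx [Hy Hd]]]]; simpl in Hy; subst y.
  - simpl in Hx; subst x; exists (V v); split; [|apply same_refl].
    apply in_or_app; left; apply in_map, near_ball, near_sym, near_of_dist_le; exact Hd.
  - assert (Hin : In x (ball (r + eps) g0)) by exact (near_ball (near_sym (near_of_dist_le Hd))).
    destruct (cosets_through_same HP HLam Hin Hx) as [w [Hw Hs]].
    exists w; split; [apply in_or_app; right; exact Hw|exact Hs].
Qed.

Lemma hull_finite_between_cosets (enumLam : list Lam) eps r U la ga lb gb :
  fineC G Sg Lam P -> (forall l, is_subgroup G (P l)) -> (forall l, In l enumLam) ->
  generates G Sg -> In (W la ga) U -> In (W lb gb) U -> ~ same (W la ga) (W lb gb) ->
  finite_vset G Lam P (in_hull G Sg Lam P eps r U).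
Proof.
  intros Hfine HP HLam HS Ha Hb Hab.
  destruct (generates_connected HS gb ga) as [n Hn].
  destruct (near_simple Hn) as [Sig [HSig [HSig_nodup _]]].
  destruct (vertices_near_both_finite Hfine HP Hab HSig HSig_nodup r) as [Vr HVr].
  destruct (cosets_near_both_finite Hfine HP Hab HSig HSig_nodup HLam (r + eps)) as [Wk HWk].
  exists (map V Vr ++ Wk); intros [v|l g] Hz.
  - destruct (Hz _ Ha) as [x1 [y1 [Hx1 [Hy1 Hd1]]]].
    destruct (Hz _ Hb) as [x2 [y2 [Hx2 [Hy2 Hd2]]]]; simpl in Hx1, Hx2; subst x1 x2.
    exists (V v); split; [apply in_or_app; left; apply in_map|apply same_refl].
    exact (HVr _ _ _ Hy1 Hy2 (near_of_dist_le Hd1) (near_of_dist_le Hd2)).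
  - destruct (Hz _ Ha) as [x1 [y1 [Hx1 [Hy1 Hd1]]]].
    destruct (Hz _ Hb) as [x2 [y2 [Hx2 [Hy2 Hd2]]]].
    destruct (HWk l g x1 y1 x2 y2 Hx1 Hy1 (near_of_dist_le Hd1) Hx2 Hy2 (near_of_dist_le Hd2))
      as [w [Hw Hs]].
    exists w; split; [apply in_or_app; right; exact Hw|exact Hs].
Qed.

End ConedOff.

Unset Implicit Arguments.

Theorem lemma3p9
  (G : group) (S : list G) (Lam : Type) (enumLam : list Lam)
  (HLam : forall l : Lam, In l enumLam)
  (P : Lam -> G -> Prop) (HP : forall l, is_subgroup G (P l))
  (HS : generates G S)
  (Hrh : rel_hyperbolic G S Lam P)
  (eps R D : nat) (Hthin : thin_triangle_constants G S Lam P eps R D)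
  (U : list (vtx G Lam))
  (HU2 : exists a b, In a U /\ In b U /\ ~ same_vtx G Lam P a b) :
  forall r : nat, 0 < r ->
    finite_vset G Lam P (in_hull G S Lam P eps r U).
Proof.
  intros r _; destruct Hrh as [Hfine _]; destruct HU2 as [a [b [Ha [Hb Hab]]]].
  destruct a as [ga|la ga]; [exact (hull_finite_at_vertex S eps r HP HLam Ha)|].
  destruct b as [gb|lb gb]; [exact (hull_finite_at_vertex S eps r HP HLam Hb)|].
  exact (hull_finite_between_cosets eps r Hfine HP HLam HS Ha Hb Hab).
Qed.
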